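(* The compactness theorem holds for propositional team logic $\mathrm{PTL}$.
   Context: $\mathrm{PTL}$ is the closure of propositional logic $\mathrm{PL}$ under the strong negation $\sim$, the material implication (written here $\varphi\Rightarrow\psi$, true in a team iff the team falsifies $\varphi$ or satisfies $\psi$) and the linear implication $\multimap$, interpreted on teams $T$ of propositional assignments: a classical formula holds in $T$ iff it holds for every assignment in $T$; $T\models\sim\varphi$ iff $T\not\models\varphi$; $T\models\varphi\multimap\psi$ iff for all $S,U$ with $S\cup U=T$ (lax splitting), $S\models\varphi$ implies $U\models\psi$. It is a consequence of the soundness and completeness of the Hilbert-style system $\mathsf{H}^0\mathsf{L}\mathsf{S}$ for $\mathrm{PTL}$. *)

From Stdlib Require Import List.

Definition assignment := nat -> bool.

(* A team is an arbitrary (possibly empty, possibly infinite) set of assignments. *)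
Definition team := assignment -> Prop.

Inductive cform : Type :=
  | CVar : nat -> cform
  | CBot : cform
  | CNeg : cform -> cform
  | CAnd : cform -> cform -> cform
  | COr  : cform -> cform -> cform
  | CImp : cform -> cform -> cform.

Fixpoint ceval (s : assignment) (a : cform) : bool :=
  match a with
  | CVar p => s p
  | CBot => false
  | CNeg b => negb (ceval s b)
  | CAnd b c => andb (ceval s b) (ceval s c)
  | COr b c => orb (ceval s b) (ceval s c)
  | CImp b c => orb (negb (ceval s b)) (ceval s c)
  end.

Inductive form : Type :=
  | Cl   : cform -> form
  | SNeg : form -> form
  | MImp : form -> form -> form
  | LImp : form -> form -> form.

Fixpoint sat (T : team) (phi : form) : Prop :=
  match phi with
  | Cl a => forall s, T s -> ceval s a = true
  | SNeg f => ~ sat T f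
  | MImp f g => ~ sat T f \/ sat T g
  | LImp f g => forall S U : team,
      (forall s, T s <-> (S s \/ U s)) -> sat S f -> sat U g
  end.

Definition entails (Gamma : form -> Prop) (phi : form) : Prop :=
  forall T : team, (forall g, Gamma g -> sat T g) -> sat T phi.

(* Satisfaction of a formula mentioning only the variables below n depends only on the
   set of length-n prefixes realised by the team, and there are finitely many such sets.
   If no finite part of Gamma entails phi, every finite part has a countermodel; by the
   finiteness at each level we can choose, level by level, prefix classes that still
   contain countermodels for every finite part, each refining the previous one
   (a König-style argument).  The team of all assignments whose prefixes are realised
   along this chain satisfies Gamma and refutes phi. *)

From Stdlib Require Import List.
From Stdlib Require Import Arith Lia Classical ClassicalEpsilon.
Import ListNotations.

Definition prefix (n : nat) (s : assignment) : list bool := map s (seq 0 n).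

Lemma map_seq_eq n a (s t : assignment) :
  map s (seq a n) = map t (seq a n) <-> (forall i, a <= i < a + n -> s i = t i).
Proof.
  revert a; induction n as [|n IH]; intros a; simpl; split.
  - intros _ i Hi; lia.
  - reflexivity.
  - intros Heq i Hi; injection Heq as Ha Hrest.
    destruct (Nat.eq_dec i a) as [->|Hne]; [exact Ha|].
    apply (proj1 (IH (S a)) Hrest); lia.
  - intros H; f_equal; [apply H; lia|].
    apply IH; intros i Hi; apply H; lia.
Qed.

Lemma prefix_eq n s t : prefix n s = prefix n t <-> (forall i, i < n -> s i = t i).
Proof. unfold prefix; rewrite map_seq_eq; split; intros H i Hi; apply H; lia. Qed.

Lemma prefix_eq_le k m s t : k <= m -> prefix m s = prefix m t -> prefix k s = prefix k t.
Proof.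
  intros Hkm H; apply prefix_eq; intros i Hi.
  apply (proj1 (prefix_eq m s t) H); lia.
Qed.

Lemma length_prefix n s : length (prefix n s) = n.
Proof. unfold prefix; rewrite length_map, length_seq; reflexivity. Qed.

Definition trace (n : nat) (T : team) (w : list bool) : Prop :=
  exists s, T s /\ prefix n s = w.

Definition agree (n : nat) (T T' : team) : Prop := forall w, trace n T w <-> trace n T' w.

Lemma agree_refl n T : agree n T T.
Proof. intros w; reflexivity. Qed.

Lemma agree_sym n T T' : agree n T T' -> agree n T' T.
Proof. intros H w; symmetry; apply H. Qed.

Lemma agree_trans n T1 T2 T3 : agree n T1 T2 -> agree n T2 T3 -> agree n T1 T3.
Proof. intros H1 H2 w; rewrite (H1 w); apply H2. Qed.

Lemma agree_le_trace k m T T' s :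
  k <= m -> agree m T T' -> T s -> exists t, T' t /\ prefix k t = prefix k s.
Proof.
  intros Hkm H Hs.
  destruct (proj1 (H (prefix m s)) (ex_intro _ s (conj Hs eq_refl))) as [t [Ht Hts]].
  exists t; split; [exact Ht|]; exact (prefix_eq_le k m t s Hkm Hts).
Qed.

Lemma agree_le k m T T' : k <= m -> agree m T T' -> agree k T T'.
Proof.
  intros Hkm H w; split; intros [s [Hs <-]].
  - destruct (agree_le_trace k m T T' s Hkm H Hs) as [t [Ht Hts]]; exists t; auto.
  - destruct (agree_le_trace k m T' T s Hkm (agree_sym _ _ _ H) Hs) as [t [Ht Hts]].
    exists t; auto.
Qed.

(** * Locality of satisfaction *)

Fixpoint cvar_bound (a : cform) : nat :=
  match a with
  | CVar p => S p
  | CBot => 0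
  | CNeg b => cvar_bound b
  | CAnd b c | COr b c | CImp b c => Nat.max (cvar_bound b) (cvar_bound c)
  end.

Fixpoint var_bound (f : form) : nat :=
  match f with
  | Cl a => cvar_bound a
  | SNeg g => var_bound g
  | MImp g h | LImp g h => Nat.max (var_bound g) (var_bound h)
  end.

Lemma ceval_prefix a n s t :
  cvar_bound a <= n -> prefix n s = prefix n t -> ceval s a = ceval t a.
Proof.
  intros Hb Hst; rewrite prefix_eq in Hst.
  induction a; simpl in *;
    repeat match goal with IH : _ -> ceval s ?b = ceval t ?b |- _ =>
             rewrite IH by lia; clear IH end;
    auto with arith.
Qed.

(* A split of T' is pulled back to T by sorting each member of T according to the
   side on which its prefix is realised. *)
Lemma agree_split n T T' S U :
  agree n T T' -> (forall s, T' s <-> S s \/ U s) ->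
  exists S0 U0, (forall s, T s <-> S0 s \/ U0 s) /\ agree n S0 S /\ agree n U0 U.
Proof.
  intros HTT' HSU.
  assert (Hpart : forall V : team, (forall s, V s -> T' s) ->
            agree n (fun s => T s /\ trace n V (prefix n s)) V).
  { intros V HV w; split.
    - intros [s [[_ [v [Hv Hvs]]] <-]]; exists v; split; congruence.
    - intros [v [Hv <-]].
      destruct (agree_le_trace n n T' T v (le_n n) (agree_sym _ _ _ HTT') (HV v Hv))
        as [t [Ht Htv]].
      exists t; split; [split; [exact Ht|]; exists v|]; auto. }
  exists (fun s => T s /\ trace n S (prefix n s)), (fun s => T s /\ trace n U (prefix n s)).
  split; [|split; apply Hpart; intros s Hs; apply HSU; auto].
  intros s; split.
  - intros Hs.
    destruct (agree_le_trace n n T T' s (le_n n) HTT' Hs) as [t [Ht Hts]].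
    apply HSU in Ht as [Ht|Ht]; [left|right]; split; auto; exists t; auto.
  - intros [[Hs _]|[Hs _]]; exact Hs.
Qed.

Lemma sat_agree f n T T' : var_bound f <= n -> agree n T T' -> (sat T f <-> sat T' f).
Proof.
  revert n T T'; induction f as [a|f IH|f IHf g IHg|f IHf g IHg];
    intros n T T' Hb HTT'; simpl in *.
  - assert (Hdir : forall T1 T2, agree n T1 T2 ->
              (forall s, T1 s -> ceval s a = true) -> forall s, T2 s -> ceval s a = true).
    { intros T1 T2 H12 H1 s Hs.
      destruct (agree_le_trace n n T2 T1 s (le_n n) (agree_sym _ _ _ H12) Hs)
        as [t [Ht Hts]].
      rewrite <- (ceval_prefix a n t s Hb Hts); auto. }
    split; apply Hdir; [|apply agree_sym]; exact HTT'.
  - rewrite (IH n T T' Hb HTT'); reflexivity.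
  - rewrite (IHf n T T' ltac:(lia) HTT'), (IHg n T T' ltac:(lia) HTT'); reflexivity.
  - assert (Hdir : forall T1 T2, agree n T1 T2 ->
              (forall S U, (forall s, T1 s <-> S s \/ U s) -> sat S f -> sat U g) ->
              forall S U, (forall s, T2 s <-> S s \/ U s) -> sat S f -> sat U g).
    { intros T1 T2 H12 H1 S U HSU HS.
      destruct (agree_split n T1 T2 S U H12 HSU) as [S0 [U0 [HSU0 [HS0 HU0]]]].
      apply (IHg n U0 U ltac:(lia) HU0), (H1 S0 U0 HSU0).
      apply (IHf n S0 S ltac:(lia) HS0), HS. }
    split; apply Hdir; [|apply agree_sym]; exact HTT'.
Qed.

(** * Finitely many traces at each level *)

Fixpoint words (n : nat) : list (list bool) :=
  match n with
  | 0 => [nil]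
  | S m => map (cons true) (words m) ++ map (cons false) (words m)
  end.

Lemma in_words n w : length w = n -> In w (words n).
Proof.
  revert w; induction n as [|n IH]; intros [|b w] Hw; simpl in *;
    try discriminate; auto.
  apply in_or_app; destruct b; [left|right]; apply in_map, IH; lia.
Qed.

Fixpoint sublists {A : Type} (l : list A) : list (list A) :=
  match l with
  | nil => [nil]
  | a :: l' => map (cons a) (sublists l') ++ sublists l'
  end.

Lemma sublists_complete {A : Type} (W : list A) (P : A -> Prop) :
  (forall w, P w -> In w W) -> exists L, In L (sublists W) /\ forall w, P w <-> In w L.
Proof.
  revert P; induction W as [|a W IH]; intros P HP; simpl.
  - exists nil; split; [auto|]; intros w; split; [apply HP|intros []].
  - destruct (IH (fun w => P w /\ w <> a)) as [L [HL HPL]].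
    { intros w [Hw Hne]; destruct (HP w Hw); [congruence|assumption]. }
    destruct (classic (P a)) as [Pa|nPa].
    + exists (a :: L); split; [apply in_or_app; left; apply in_map, HL|].
      intros w; simpl; rewrite <- HPL.
      destruct (classic (w = a)) as [->|Hne]; [tauto|].
      split; [intros Hw; right; auto|intros [<-|[Hw _]]; [contradiction|exact Hw]].
    + exists L; split; [apply in_or_app; right; exact HL|].
      intros w; rewrite <- HPL; split; [|tauto].
      intros Hw; split; [exact Hw|]; intros ->; contradiction.
Qed.

Lemma trace_code n T :
  exists L, In L (sublists (words n)) /\ forall w, trace n T w <-> In w L.
Proof.
  apply sublists_complete; intros w [s [_ <-]]; apply in_words, length_prefix.
Qed.

Definition sat_all (D : list form) (T : team) : Prop := forall g, In g D -> sat T g.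

Definition refutable (Gamma : form -> Prop) (phi : form) (C : team -> Prop) : Prop :=
  forall D, (forall g, In g D -> Gamma g) -> exists T, C T /\ sat_all D T /\ ~ sat T phi.

Lemma not_refutable Gamma phi C :
  ~ refutable Gamma phi C ->
  exists D, (forall g, In g D -> Gamma g) /\ forall T, C T -> sat_all D T -> sat T phi.
Proof.
  intros H; apply NNPP; intros Hno; apply H; intros D HD.
  apply NNPP; intros HT; apply Hno; exists D; split; [exact HD|].
  intros T CT HDT; apply NNPP; intros Hphi; apply HT; exists T; auto.
Qed.

(* If every class of level n inside C failed, the finite parts of Gamma witnessing the
   failures, one per trace in [sublists (words n)], would together fail on all of C. *)
Lemma refutable_refine Gamma phi (C : team -> Prop) n :
  (forall T T', C T -> agree n T T' -> C T') -> refutable Gamma phi C ->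
  exists T, C T /\ refutable Gamma phi (agree n T).
Proof.
  intros HC Href; apply NNPP; intros Hno.
  assert (Hcover : forall Ls : list (list (list bool)),
    exists D, (forall g, In g D -> Gamma g) /\
      forall T, C T -> (exists L, In L Ls /\ forall w, trace n T w <-> In w L) ->
      sat_all D T -> sat T phi).
  { induction Ls as [|L Ls [D [HD HDphi]]].
    - exists nil; split; [intros g []|intros T _ [L [[] _]]].
    - destruct (classic (exists T0, C T0 /\ forall w, trace n T0 w <-> In w L))
        as [[T0 [CT0 HT0]]|Hnone].
      + destruct (not_refutable Gamma phi (agree n T0)) as [D0 [HD0 HD0phi]].
        { intros Href0; apply Hno; exists T0; auto. }
        exists (D0 ++ D); split.
        { intros g Hg; apply in_app_or in Hg as [Hg|Hg]; auto. }
        intros T CT [L' [[<-|HL'] HTL']] HDT.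
        * apply HD0phi; [intros w; rewrite HT0, HTL'; reflexivity|].
          intros g Hg; apply HDT, in_or_app; auto.
        * apply HDphi; [exact CT|exists L'; auto|].
          intros g Hg; apply HDT, in_or_app; auto.
      + exists D; split; [exact HD|].
        intros T CT [L' [[<-|HL'] HTL']] HDT.
        * exfalso; apply Hnone; exists T; auto.
        * apply HDphi; [exact CT|exists L'; auto|exact HDT]. }
  destruct (Hcover (sublists (words n))) as [D [HD HDphi]].
  destruct (Href D HD) as [T [CT [HDT Hphi]]].
  apply Hphi, HDphi; [exact CT|apply trace_code|exact HDT].
Qed.

Lemma refutable_agree_sat Gamma phi n T g :
  refutable Gamma phi (agree n T) -> Gamma g -> var_bound g <= n -> sat T g.
Proof.
  intros Href Hg Hb.
  destruct (Href [g]) as [T' [HTT' [HT'g _]]]; [intros g' [<-|[]]; exact Hg|].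
  apply (sat_agree g n T T' Hb HTT'), HT'g; left; reflexivity.
Qed.

Lemma refutable_agree_unsat Gamma phi n T :
  refutable Gamma phi (agree n T) -> var_bound phi <= n -> ~ sat T phi.
Proof.
  intros Href Hb.
  destruct (Href nil) as [T' [HTT' [_ HT'phi]]]; [intros g []|].
  rewrite (sat_agree phi n T T' Hb HTT'); exact HT'phi.
Qed.

(** * Limits of coherent sequences of teams *)

(* The diagonal [fun x => b (S x) x] reads each variable at a stage where it is settled. *)
Lemma diagonal_prefix k (b : nat -> assignment) :
  (forall i, prefix (k + i) (b (S i)) = prefix (k + i) (b i)) ->
  forall i, prefix (k + i) (fun x => b (S x) x) = prefix (k + i) (b i).
Proof.
  intros Hcoh.
  assert (Hstable : forall i j, i <= j -> prefix (k + i) (b j) = prefix (k + i) (b i)).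
  { intros i j; induction 1 as [|j Hij IH]; [reflexivity|].
    rewrite <- IH; apply (prefix_eq_le (k + i) (k + j)); [lia|apply Hcoh]. }
  intros i; apply prefix_eq; intros x Hx.
  destruct (le_lt_dec (S x) i) as [Hxi|Hix].
  - apply (proj1 (prefix_eq (k + S x) _ _) (eq_sym (Hstable (S x) i Hxi))); lia.
  - apply (proj1 (prefix_eq (k + i) _ _) (Hstable i (S x) ltac:(lia))); lia.
Qed.

Section Limit.

Variable T : nat -> team.
Hypothesis agree_succ : forall n, agree n (T n) (T (S n)).

Lemma agree_chain k m : k <= m -> agree k (T k) (T m).
Proof.
  induction 1 as [|m Hkm IH]; [apply agree_refl|].
  apply (agree_trans k _ (T m)); [exact IH|].
  apply (agree_le k m); [exact Hkm|apply agree_succ].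
Qed.

Definition limit : team := fun s => forall k, trace k (T k) (prefix k s).

Lemma path_from k t :
  T k t -> exists b : nat -> assignment, b 0 = t /\
    (forall i, T (k + i) (b i)) /\
    (forall i, prefix (k + i) (b (S i)) = prefix (k + i) (b i)).
Proof.
  intros Ht.
  set (lift := fun m (u : assignment) =>
    epsilon (inhabits u) (fun u' => T (S m) u' /\ prefix m u' = prefix m u)).
  assert (Hlift : forall m u, T m u -> T (S m) (lift m u) /\ prefix m (lift m u) = prefix m u).
  { intros m u Hu; apply epsilon_spec.
    exact (agree_le_trace m m (T m) (T (S m)) u (le_n m) (agree_succ m) Hu). }
  set (b := fix b i := match i with 0 => t | S i => lift (k + i) (b i) end).
  assert (Hb : forall i, T (k + i) (b i)).
  { induction i as [|i IH]; simpl; [rewrite Nat.add_0_r; exact Ht|].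
    rewrite Nat.add_succ_r; apply Hlift, IH. }
  exists b; split; [reflexivity|split; [exact Hb|]].
  intros i; apply Hlift, Hb.
Qed.

Lemma agree_limit k : agree k limit (T k).
Proof.
  intros w; split; [intros [s [Hs <-]]; apply Hs|].
  intros [t [Ht <-]].
  destruct (path_from k t Ht) as [b [Hb0 [Hb Hcoh]]].
  pose proof (diagonal_prefix k b Hcoh) as Hdiag.
  exists (fun x => b (S x) x); split.
  - intros j.
    apply (agree_chain j (k + j) ltac:(lia)).
    exists (b j); split; [apply Hb|].
    symmetry; apply (prefix_eq_le j (k + j)); [lia|apply Hdiag].
  - specialize (Hdiag 0); rewrite Nat.add_0_r in Hdiag; rewrite Hdiag, Hb0; reflexivity.
Qed.

End Limit.

Section Compactness.

Variable Gamma : form -> Prop.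
Variable phi : form.
Hypothesis refutable_all : refutable Gamma phi (fun _ => True).

Definition good (n : nat) (T : team) : Prop := refutable Gamma phi (agree n T).

Lemma good_refine n T : good n T -> exists T', agree n T T' /\ good (S n) T'.
Proof.
  intros HT; apply refutable_refine; [|exact HT].
  intros T1 T2 H1 H2; apply (agree_trans n T T1 T2); [exact H1|].
  apply (agree_le n (S n)); [lia|exact H2].
Qed.

Definition empty_team : team := fun _ => False.

Definition good_next (n : nat) (T : team) : team :=
  epsilon (inhabits empty_team) (fun T' => agree n T T' /\ good (S n) T').

Lemma good_next_spec n T :
  good n T -> agree n T (good_next n T) /\ good (S n) (good_next n T).
Proof. intros HT; unfold good_next; apply epsilon_spec, good_refine, HT. Qed.

Fixpoint good_chain (n : nat) : team :=
  match n with
  | 0 => epsilon (inhabits empty_team) (good 0)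
  | S m => good_next m (good_chain m)
  end.

Lemma good_chain_good n : good n (good_chain n).
Proof.
  induction n as [|n IH]; simpl.
  - apply (epsilon_spec (inhabits empty_team) (good 0)).
    destruct (refutable_refine Gamma phi (fun _ => True) 0 (fun _ _ _ _ => I)
                refutable_all) as [T [_ HT]].
    exists T; exact HT.
  - apply good_next_spec, IH.
Qed.

Lemma agree_good_chain n : agree n (good_chain n) (good_chain (S n)).
Proof. apply good_next_spec, good_chain_good. Qed.

Lemma limit_good_chain n : good n (limit good_chain).
Proof.
  intros D HD.
  destruct (good_chain_good n D HD) as [T [HT HTD]].
  exists T; split; [|exact HTD].
  apply (agree_trans n _ (good_chain n)); [|exact HT].
  apply agree_limit, agree_good_chain.
Qed.

End Compactness.

Theorem mainTheorem2 :
  forall (Gamma : form -> Prop) (phi : form),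
    entails Gamma phi ->
    exists Delta : list form,
      (forall g, In g Delta -> Gamma g) /\
      entails (fun g => In g Delta) phi.
Proof.
  intros Gamma phi Hent.
  destruct (classic (refutable Gamma phi (fun _ => True))) as [Href|Hnref].
  - set (Tinf := limit (good_chain Gamma phi)).
    exfalso; apply (refutable_agree_unsat Gamma phi (var_bound phi) Tinf);
      [apply limit_good_chain, Href|lia|].
    apply Hent; intros g Hg.
    apply (refutable_agree_sat Gamma phi (var_bound g)); [|exact Hg|lia].
    apply limit_good_chain, Href.
  - destruct (not_refutable Gamma phi (fun _ => True) Hnref) as [D [HD HDphi]].
    exists D; split; [exact HD|].
    intros T HT; apply HDphi; [exact I|exact HT].
Qed.
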